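(* Let $A$ be a finite set of options containing a default option $0$, and consider $V\ge1$ votes, each a truncated ranking with possible ties, interpreted as in the context, with Llull matrix $v$. Let $W$ be the set of path-revised approval choices of $v$. If $x,y\in A$, $x$ dominates $y$ in the sense of Pareto, and $y\in W$, then $x\in W$.
   Context: A truncated ranking with ties is a weak order on a subset of $A$ (the ranked options); for ranked options, $x$ is preferred to $y$ if strictly above, and ranked equally if tied; every ranked option is preferred to every unranked option; two unranked options are not compared. Llull matrix: $v_{xy}=(\#\{\text{votes preferring }x\text{ to }y\}+\tfrac12\#\{\text{votes ranking }x,y\text{ equally}\})/V$. Path scores: $v^*_{xy}=\max\min(v_{x_0x_1},\dots,v_{x_{m-1}x_m})$ over all paths $x_0\dots x_m$ ($m\ge1$, $x_0=x$, $x_m=y$, $x_i$ pairwise distinct). For $z\in A$, $D(z)=v^*_{z0}-v^*_{0z}$ if $z\ne0$ and $D(0)=0$; $x$ is a path-revised approval choice if $D(x)\ge D(z)$ for all $z\ne x$. $x$ dominates $y$ in the sense of Pareto if every vote either prefers $x$ to $y$ or ranks them equally, and at least one vote prefers $x$ to $y$. *)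

From mathcomp Require Import all_boot all_order all_algebra.
Set Implicit Arguments. Unset Strict Implicit. Unset Printing Implicit Defensive.
Import Order.TTheory GRing.Theory Num.Theory.
Local Open Scope ring_scope.

(* A truncated ranking with ties on options A: a rank function.
   [r x = Some k]: x is ranked at level k (smaller = better; equal levels = tie);
   [r x = None]: x is unranked.  Every weak order on a subset of A arises this way. *)
Definition ballot (A : finType) := A -> option nat.

Definition prefers (A : finType) (r : ballot A) (x y : A) : bool :=
  match r x, r y with
  | Some i, Some j => (i < j)%N
  | Some _, None => true
  | _, _ => false
  end.

Definition ties (A : finType) (r : ballot A) (x y : A) : bool :=
  match r x, r y with
  | Some i, Some j => i == j
  | _, _ => false
  end.

Definition llull (A : finType) (V : nat) (b : 'I_V -> ballot A) (x y : A) : rat :=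
  ((#|[set i | prefers (b i) x y]|)%:R + (#|[set i | ties (b i) x y]|)%:R / 2%:R)
    / V%:R.

(* x :: t is a path x = x_0, ..., x_m = y with m >= 1 and pairwise distinct x_i *)
Definition is_path (A : finType) (x y : A) (t : seq A) : bool :=
  [&& (0 < size t)%N, uniq (x :: t) & last x t == y].

(* min of v over the edges of the path x :: t (t nonempty, so the default 1
   never matters since all entries of v lie in [0,1]) *)
Definition path_min (A : finType) (v : A -> A -> rat) (x : A) (t : seq A) : rat :=
  foldr Num.min 1 [seq v e.1 e.2 | e <- zip (x :: t) t].

(* path score v*_{xy}: max over all simple paths (such a path has at most
   #|A| vertices, hence t has length < #|A|).  Default 0 only matters when no
   path exists (x = y), which is never used. *)
Definition path_score (A : finType) (v : A -> A -> rat) (x y : A) : rat :=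
  \big[Num.max/0]_(n < #|A|)
    \big[Num.max/0]_(t : n.-tuple A | is_path x y t) path_min v x t.

Definition Dscore (A : finType) (o : A) (v : A -> A -> rat) (z : A) : rat :=
  if z == o then 0 else path_score v z o - path_score v o z.

Definition pra_choices (A : finType) (o : A) (v : A -> A -> rat) : {set A} :=
  [set x | [forall z, (z != x) ==> (Dscore o v z <= Dscore o v x)]].

Definition pareto_dom (A : finType) (V : nat) (b : 'I_V -> ballot A) (x y : A) : Prop :=
  (forall i, prefers (b i) x y || ties (b i) x y) /\ (exists i, prefers (b i) x y).

(** Pareto dominance of x over y makes the row of x in the Llull matrix dominate
    the row of y, and the column of y dominate the column of x.  Relabelling y as
    x along a path from y to the default 0 thus yields a walk from x to 0 that is
    at least as strong, so v*(y,0) <= v*(x,0); likewise v*(0,x) <= v*(0,y); and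
    exchanging x and y gives v*(y,x) <= v*(x,y), which settles the cases where x
    or y is the default.  Hence D(y) <= D(x), and a maximiser y of D passes the
    property on to x. *)
From mathcomp Require Import all_boot all_order all_algebra.
From mathcomp Require Import zify.
Set Implicit Arguments. Unset Strict Implicit. Unset Printing Implicit Defensive.
Import Order.TTheory GRing.Theory Num.Theory.
Local Open Scope ring_scope.

Lemma uniq_path_edges (T : eqType) (e : rel T) (a : T) (t : seq T) :
  uniq (a :: t) -> path e a t ->
  path (fun c d => [&& e c d, c != d, d != a & c != last a t]) a t.
Proof.
move=> ut /(pathP a) et; apply/(pathP a) => i it.
have neq_nth j k : (j < k <= size t)%N -> nth a (a :: t) j != nth a (a :: t) k.
  by case/andP=> jk kt; rewrite nth_uniq ?ltnS ?(leq_trans (ltnW jk)) // neq_ltn jk.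
rewrite et //=; apply/and3P; split.
- by apply: (neq_nth i i.+1); rewrite ltnSn.
- by rewrite eq_sym; apply: (neq_nth 0 i.+1).
- rewrite -[last a t]/(last a (a :: t)) -nth_last.
  by apply: (neq_nth i (size t)); rewrite it /=.
Qed.

Section PathScore.
Variable A : finType.
Variable v : A -> A -> rat.

Lemma path_min_le1 (c : A) (t : seq A) : path_min v c t <= 1.
Proof. by elim: t c => [|d t IH] c //; rewrite /path_min /= ge_min IH orbT. Qed.

Lemma le_path_min (m : rat) (c : A) (t : seq A) : m <= 1 ->
  (m <= path_min v c t) = path (fun a b => m <= v a b) c t.
Proof. by move=> m1; elim: t c => [|d t IH] c //=; rewrite -IH /path_min /= le_min. Qed.

Lemma path_score_ge0 (a b : A) : 0 <= path_score v a b.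
Proof. exact: bigmax_ge_id. Qed.

(* A walk may stutter ([c == d]); shortening it yields a simple path. *)
Lemma walk_le_path_score (m : rat) (a b : A) (p : seq A) :
  a != b -> m <= 1 -> last a p = b ->
  path (fun c d => (c == d) || (m <= v c d)) a p -> m <= path_score v a b.
Proof.
move=> ab m1 last_p walk_p; subst b; case/shortenP: walk_p ab => p' walk_p' uniq_p' _ ab.
have size_p' : (size p' < #|A|)%N.
  by have := max_card (mem (a :: p')); rewrite (card_uniqP uniq_p').
have p'_gt0 : (0 < size p')%N by case: p' {walk_p' uniq_p' size_p'} ab; rewrite ?eqxx.
apply: (bigmax_sup (Ordinal size_p')) => //.
apply: (bigmax_sup (@Tuple _ A p' (eqxx _))); first by rewrite /is_path p'_gt0 uniq_p' /=.
rewrite le_path_min //; apply: sub_path (uniq_path_edges uniq_p' walk_p').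
by move=> c d /and4P[/orP[/eqP-> | //]]; rewrite eqxx.
Qed.

Lemma path_score_relabel (f : A -> A) (a b : A) :
  f a != f b ->
  (forall c d, c != d -> d != a -> c != b -> (f c == f d) || (v c d <= v (f c) (f d))) ->
  path_score v a b <= path_score v (f a) (f b).
Proof.
move=> fab f_edge; apply: bigmax_le => [|n _]; first exact: path_score_ge0.
apply: bigmax_le => [|t /and3P[_ uniq_t /eqP last_t]]; first exact: path_score_ge0.
apply: (walk_le_path_score (p := map f t)) => //; first exact: path_min_le1.
  by rewrite last_map last_t.
have walk_t : path (fun c d => path_min v a t <= v c d) a t.
  by rewrite -le_path_min ?path_min_le1.
rewrite path_map; apply: sub_path (uniq_path_edges uniq_t walk_t).
move=> c d /and4P[m_cd cd da]; rewrite last_t => cb /=.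
by case/orP: (f_edge c d cd da cb) => [-> // | le_cd]; rewrite (le_trans m_cd le_cd) orbT.
Qed.

Definition dominates (x y : A) : Prop :=
  forall z, v y z <= v x z /\ v z x <= v z y.

Section Dominance.
Variables x y : A.
Hypothesis dom_xy : dominates x y.

Lemma path_score_dominates_swap : path_score v y x <= path_score v x y.
Proof.
have [<- // | xy] := eqVneq x y.
pose f c := if c == x then y else if c == y then x else c.
have fx : f x = y by rewrite /f eqxx.
have fy : f y = x by rewrite /f eq_sym (negbTE xy) eqxx.
rewrite -{2}fx -{2}fy; apply: path_score_relabel; first by rewrite fx fy.
move=> c d _ dy cx; rewrite /f (negbTE cx) (negbTE dy).
have [-> | _] := eqVneq c y; have [-> | _] := eqVneq d x.
- by rewrite (le_trans (proj2 (dom_xy y)) (proj1 (dom_xy y))) orbT.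
- by rewrite (proj1 (dom_xy d)) orbT.
- by rewrite (proj2 (dom_xy c)) orbT.
- by rewrite lexx orbT.
Qed.

Lemma path_score_dominates_from (o : A) :
  x != o -> y != o -> path_score v y o <= path_score v x o.
Proof.
move=> xo yo; pose g c := if c == y then x else c.
have gy : g y = x by rewrite /g eqxx.
have go : g o = o by rewrite /g eq_sym (negbTE yo).
rewrite -gy -{2}go; apply: path_score_relabel; first by rewrite gy go.
move=> c d _ dy _; rewrite /g (negbTE dy).
have [-> | _] := eqVneq c y; last by rewrite lexx orbT.
by have [-> | _] := eqVneq x d; rewrite ?eqxx // (proj1 (dom_xy d)) orbT.
Qed.

Lemma path_score_dominates_to (o : A) :
  x != o -> y != o -> path_score v o x <= path_score v o y.
Proof.
move=> xo yo; pose h c := if c == x then y else c.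
have hx : h x = y by rewrite /h eqxx.
have ho : h o = o by rewrite /h eq_sym (negbTE xo).
rewrite -hx -{2}ho; apply: path_score_relabel; first by rewrite hx ho eq_sym.
move=> c d _ _ cx; rewrite /h (negbTE cx).
have [-> | _] := eqVneq d x; last by rewrite lexx orbT.
by have [-> | _] := eqVneq c y; rewrite ?eqxx // (proj2 (dom_xy c)) orbT.
Qed.

Lemma Dscore_dominates (o : A) : Dscore o v y <= Dscore o v x.
Proof.
rewrite /Dscore; have [xo | xo] := eqVneq x o.
  by case: ifP => // _; rewrite -xo subr_le0 path_score_dominates_swap.
have [yo | yo] := eqVneq y o; first by rewrite -yo subr_ge0 path_score_dominates_swap.
by rewrite lerB ?path_score_dominates_from ?path_score_dominates_to.
Qed.

Lemma pra_choices_dominates (o : A) :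
  y \in pra_choices o v -> x \in pra_choices o v.
Proof.
rewrite !inE => /forallP y_max; apply/forallP => z; apply/implyP => _.
have [-> | zy] := eqVneq z y; first exact: Dscore_dominates.
by apply: le_trans (Dscore_dominates o); move/implyP: (y_max z); apply.
Qed.

End Dominance.
End PathScore.

Definition vote_points (A : finType) (r : ballot A) (a z : A) : nat :=
  ((prefers r a z).*2 + ties r a z)%N.

Lemma vote_points_weak_pareto (A : finType) (r : ballot A) (x y z : A) :
  prefers r x y || ties r x y ->
  (vote_points r y z <= vote_points r x z)%N /\ (vote_points r z x <= vote_points r z y)%N.
Proof.
rewrite /vote_points /prefers /ties.
case: (r x) => [i|]; case: (r y) => [j|]; case: (r z) => [l|] //= H.
- have {H} ij : (i <= j)%N by case/orP: H => [/ltnW | /eqP->].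
  by case: (ltngtP i l); case: (ltngtP j l) => //= *; lia.
all: by case: (ltngtP i l).
Qed.

Lemma card_set_nat (n : nat) (P : pred 'I_n) : #|[set i | P i]| = (\sum_i P i)%N.
Proof. by rewrite -sum1_card big_mkcond; apply: eq_bigr => i _; rewrite inE; case: (P i). Qed.

Lemma llullE (A : finType) (V : nat) (b : 'I_V -> ballot A) (a z : A) :
  llull b a z = (\sum_i vote_points (b i) a z)%:R / (V.*2)%:R.
Proof.
have sum_double (F : 'I_V -> nat) : (\sum_i (F i).*2 = (\sum_i F i).*2)%N.
  exact/esym/(big_morph double doubleD double0).
rewrite /llull /vote_points !card_set_nat big_split sum_double /= -!muln2.
rewrite natrD !natrM invfM mulrA [RHS]mulrAC; congr (_ / _).
by rewrite mulrDl mulfK.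
Qed.

Lemma llull_dominates (A : finType) (V : nat) (b : 'I_V -> ballot A) (x y : A) :
  (forall i, prefers (b i) x y || ties (b i) x y) -> dominates (llull b) x y.
Proof.
move=> weak z; rewrite !llullE.
by split; apply: ler_wpM2r; rewrite ?invr_ge0 ?ler0n // ler_nat;
  apply: leq_sum => i _; have [] := vote_points_weak_pareto z (weak i).
Qed.

Theorem corollary4p3 (A : finType) (o : A) (V : nat) (b : 'I_V -> ballot A)
    (x y : A) :
  (0 < V)%N -> pareto_dom b x y ->
  y \in pra_choices o (llull b) -> x \in pra_choices o (llull b).
Proof.
move=> _ [weak _]; exact: pra_choices_dominates (llull_dominates weak) o.
Qed.
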